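(* There is an absolute constant $C>0$ such that the following holds. Let $\varepsilon=\varepsilon(n)$ satisfy $\varepsilon\le 1$ and $n\varepsilon(n)\to\infty$ (i.e. $\varepsilon\in[\omega(1/n),1]$). Then for all sufficiently large $n$, in the variable-processor cup game on $n$ cups with $\varepsilon$ resource augmentation, the greedy emptying algorithm guarantees, against every filler and at every time, backlog at most $C\varepsilon^{-1}\log n$.
   Context: The variable-processor cup game with $\varepsilon$ resource augmentation on $n$ cups: there are $n$ cups with real fills $x_1,\dots,x_n$, all initially $0$, and two adaptive players, a filler and an emptier. In each round the filler chooses an integer $1\le p\le n$ and reals $a_1,\dots,a_n\in[0,1]$ with $\sum_i a_i=p$ and replaces each $x_i$ by $x_i+a_i$; then the emptier chooses a set $S$ of exactly $p$ cups and replaces $x_i$ by $\max(0,x_i-(1+\varepsilon))$ for each $i\in S$ (fills never go below $0$). The backlog is $\max_i x_i$. The greedy emptier chooses $S$ to be $p$ cups of largest fill after the filler's move. *)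

From Stdlib Require Import Reals.
From mathcomp Require Import all_boot.

Set Implicit Arguments.
Unset Strict Implicit.
Unset Printing Implicit Defensive.

Open Scope R_scope.

Definition state (n : nat) := 'I_n -> R.

Definition valid_filler_move (n p : nat) (a : 'I_n -> R) : Prop :=
  (1 <= p)%N /\ (p <= n)%N /\
  (forall i, 0 <= a i <= 1) /\
  \big[Rplus/0]_(i < n) a i = INR p.

Definition greedy_choice (n p : nat) (y : 'I_n -> R) (S : {set 'I_n}) : Prop :=
  #|S| = p /\ (forall i j, i \in S -> j \notin S -> y j <= y i).

Definition empty_step (n : nat) (eps : R) (y : 'I_n -> R) (S : {set 'I_n}) : 'I_n -> R :=
  fun i => if i \in S then Rmax 0 (y i - (1 + eps)) else y i.

(* Quantifying over all reachable states covers every filler strategy,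
   every greedy tie-breaking rule, and every time. *)
Inductive greedy_reachable (n : nat) (eps : R) : state n -> Prop :=
| gr_init : greedy_reachable eps (fun _ => 0)
| gr_step (x : state n) (p : nat) (a : 'I_n -> R) (S : {set 'I_n}) :
    greedy_reachable eps x ->
    valid_filler_move p a ->
    greedy_choice p (fun i => x i + a i) S ->
    greedy_reachable eps (empty_step eps (fun i => x i + a i) S).

Definition backlog_le (n : nat) (x : state n) (B : R) : Prop :=
  forall i, x i <= B.

(* Track the potential [sum_i exp (lam x_i)] with [lam = eps/4]; it stays below [n K] with
   [K = 12/eps^2].  Call the [p] cups emptied by the greedy emptier heavy.  The filler's [p] units
   land on cups no heavier than the heavy ones, so filling raises the potential by at most [lam]
   times the heavy weight, while emptying divides each heavy weight by [1 + lam (1 + eps)], up to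
   an additive [1].  If the heavy weight is at least [p K] the round therefore lowers the
   potential; otherwise the heavy weight stays below [p K] and every other cup, being no heavier
   than the lightest heavy cup, has weight below [K].  Hence
   [exp (lam x_i) <= n K], i.e. [x_i <= 4/eps ln (12 n/eps^2) <= 16/eps ln n] once
   [eps >= 1/n] and [n >= 12]. *)

From HB Require Import structures.
From Stdlib Require Import Reals Lra.
From mathcomp Require Import all_boot.
Open Scope R_scope.

HB.instance Definition _ :=
  Monoid.isComLaw.Build R 0 Rplus (fun a b c => esym (Rplus_assoc a b c)) Rplus_comm Rplus_0_l.

Section RealSums.
Variable I : finType.
Implicit Types (P : pred I) (F G : I -> R).

Lemma sumR_le P F G : (forall i, P i -> F i <= G i) ->
  \big[Rplus/0]_(i | P i) F i <= \big[Rplus/0]_(i | P i) G i.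
Proof. by move=> leFG; apply: (big_ind2 (fun u v => u <= v)) => //; [lra | move=> *; lra]. Qed.

Lemma sumR_ge0 P F : (forall i, P i -> 0 <= F i) -> 0 <= \big[Rplus/0]_(i | P i) F i.
Proof. by move=> F_ge0; apply: (big_ind (fun u => 0 <= u)) => //; [lra | move=> *; lra]. Qed.

Lemma sumR_mull P c F :
  \big[Rplus/0]_(i | P i) (c * F i) = c * \big[Rplus/0]_(i | P i) F i.
Proof. by elim/big_rec2: _ => [|i u v _ ->]; ring. Qed.

Lemma iter_Rplus k c : iter k (Rplus c) 0 = INR k * c.
Proof. by elim: k => [|k IHk]; [rewrite /=; ring | rewrite iterS IHk S_INR; ring]. Qed.

Lemma sumR_const (A : {pred I}) c : \big[Rplus/0]_(i in A) c = INR #|A| * c.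
Proof. by rewrite big_const iter_Rplus. Qed.

Lemma sumR_ge_term F j : (forall i, 0 <= F i) -> F j <= \big[Rplus/0]_i F i.
Proof.
move=> F_ge0; rewrite (bigD1 j) //=.
have := sumR_ge0 (fun i => i != j) F (fun i _ => F_ge0 i); lra.
Qed.

End RealSums.

Lemma sumR_ord_const n c : \big[Rplus/0]_(i < n) c = INR n * c.
Proof. by rewrite big_const_ord iter_Rplus. Qed.

Lemma seq_argmin {T : eqType} (f : T -> R) (x0 : T) (s : seq T) :
  exists2 m, m \in x0 :: s & forall j, j \in x0 :: s -> f m <= f j.
Proof.
elim: s x0 => [|x1 s IHs] x0.
  by exists x0 => [|j]; rewrite ?mem_seq1 // => /eqP ->; lra.
have [m m_in m_min] := IHs x1.
have [le_x0m | lt_mx0] := Rle_lt_dec (f x0) (f m).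
- exists x0; first exact: mem_head.
  by move=> j; rewrite in_cons => /orP [/eqP -> | /m_min]; lra.
- exists m; first by rewrite in_cons m_in orbT.
  by move=> j; rewrite in_cons => /orP [/eqP -> | /m_min]; lra.
Qed.

Lemma exp_le_exp a b : a <= b -> exp a <= exp b.
Proof. by case/Rle_lt_or_eq_dec => [/exp_increasing | ->]; lra. Qed.

Lemma ln_le_ln a b : 0 < a -> a <= b -> ln a <= ln b.
Proof. by move=> a_gt0; case/Rle_lt_or_eq_dec => [/(ln_increasing _ _ a_gt0) | ->]; lra. Qed.

Lemma exp_mul_sub_le b t : exp b * (1 - t) <= exp (b - t).
Proof.
rewrite Rminus_def exp_plus; have := exp_ineq1_le (- t); have := exp_pos b; nra.
Qed.

Lemma exp_trunc_le lam d v : 0 <= lam -> 0 <= d -> 0 <= v ->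
  exp (lam * Rmax 0 (v - d)) <= exp (lam * v).
Proof.
move=> lam_ge0 d_ge0 v_ge0; apply: exp_le_exp; apply: Rmult_le_compat_l => //.
by apply: Rmax_lub; lra.
Qed.

(* Above the truncation an emptied cup loses the factor [exp (lam d) >= 1 + lam d];
   below it the term is [exp 0 = 1]. *)
Lemma exp_trunc_le_frac lam d v : 0 <= lam -> 0 <= d ->
  exp (lam * Rmax 0 (v - d)) <= / (1 + lam * d) * exp (lam * v) + 1.
Proof.
move=> lam_ge0 d_ge0; have ld_ge0 : 0 <= lam * d by nra.
have frac_ge0 : 0 <= / (1 + lam * d) * exp (lam * v).
  apply: Rmult_le_pos; last exact: Rlt_le (exp_pos _).
  by apply/Rlt_le/Rinv_0_lt_compat; lra.
rewrite /Rmax; case: Rle_dec => [_ | _]; last by rewrite Rmult_0_r exp_0; lra.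
have -> : lam * (v - d) = lam * v + - (lam * d) by ring.
rewrite exp_plus exp_Ropp.
have exp_ld_ge : 1 + lam * d <= exp (lam * d) := exp_ineq1_le _.
have exp_v_gt0 := exp_pos (lam * v).
suff : / exp (lam * d) <= / (1 + lam * d) by nra.
by apply: Rinv_le_contravar; lra.
Qed.

Lemma greedy_threshold {n p} {y : 'I_n -> R} {S : {set 'I_n}} :
  (0 < p)%N -> greedy_choice p y S ->
  exists theta, (forall i, i \in S -> theta <= y i) /\ (forall j, j \notin S -> y j <= theta).
Proof.
move=> p_gt0 [cardS greedy].
case E: (enum S) => [|i0 s].
  by move: p_gt0; rewrite -cardS cardE E.
have [m m_in m_min] := seq_argmin y i0 s.
rewrite -E mem_enum in m_in.
exists (y m); split=> [i i_in | j j_out]; last exact: greedy.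
by apply: m_min; rewrite -E mem_enum.
Qed.

(* The fill outside [S] has the same total as the room [1 - a i] left inside [S],
   and it carries smaller weights. *)
Lemma sum_weighted_fill_le {I : finType} (S : {set I}) (w a : I -> R) theta :
  (forall i, 0 <= a i <= 1) -> \big[Rplus/0]_i a i = INR #|S| ->
  (forall i, i \in S -> theta <= w i) -> (forall j, j \notin S -> w j <= theta) ->
  \big[Rplus/0]_i (w i * a i) <= \big[Rplus/0]_(i in S) w i.
Proof.
move=> a01 sum_a theta_in theta_out.
have room : \big[Rplus/0]_(i | i \notin S) a i = \big[Rplus/0]_(i in S) (1 - a i).
  rewrite [RHS](eq_bigr (fun i => 1 + -1 * a i)) => [|i _]; last ring.
  rewrite big_split /= sumR_mull sumR_const.
  by move: sum_a; rewrite (bigID (fun i => i \in S)) /=; lra.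
have out_le : \big[Rplus/0]_(i | i \notin S) (w i * a i) <=
              \big[Rplus/0]_(i in S) (theta * (1 - a i)).
  rewrite sumR_mull -room -sumR_mull; apply: sumR_le => j j_out.
  by have := theta_out j j_out; have := a01 j; nra.
have in_le : \big[Rplus/0]_(i in S) (w i * a i + theta * (1 - a i)) <=
             \big[Rplus/0]_(i in S) w i.
  by apply: sumR_le => i i_in; have := theta_in i i_in; have := a01 i; nra.
rewrite (bigID (fun i => i \in S)) /=.
by move: in_le; rewrite big_split /=; lra.
Qed.

Definition potential {I : finType} (lam : R) (x : I -> R) : R :=
  \big[Rplus/0]_i exp (lam * x i).

Lemma potential_fill_le {I : finType} lam (x a : I -> R) :
  potential lam (fun i => x i + a i) <=
  potential lam x + lam * \big[Rplus/0]_i (exp (lam * (x i + a i)) * a i).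
Proof.
rewrite /potential -sumR_mull -big_split; apply: sumR_le => i _ /=.
have := exp_mul_sub_le (lam * (x i + a i)) (lam * a i).
have -> : lam * (x i + a i) - lam * a i = lam * x i by ring.
lra.
Qed.

(* Emptying removes the fraction [lam d / (1 + lam d)] of the heavy weight; filling adds back
   at most [lam] of it. *)
Definition drift (lam d : R) : R := lam * d / (1 + lam * d) - lam.

Section GreedyRound.
Variables (n p : nat) (eps lam K theta : R) (x a : 'I_n -> R) (S : {set 'I_n}).
Hypotheses (eps_ge0 : 0 <= eps) (lam_gt0 : 0 < lam) (K_gt0 : 0 < K)
  (drift_K : 1 <= drift lam (1 + eps) * K)
  (x_ge0 : forall i, 0 <= x i) (a01 : forall i, 0 <= a i <= 1)
  (sum_a : \big[Rplus/0]_i a i = INR p) (card_S : #|S| = p).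

Local Notation y := (fun i => x i + a i).
Local Notation w i := (exp (lam * y i)).
Local Notation heavy := (\big[Rplus/0]_(i in S) w i).
Local Notation x' := (empty_step eps y S).

Hypotheses (theta_in : forall i, i \in S -> theta <= y i)
  (theta_out : forall j, j \notin S -> y j <= theta).

Lemma fill_ge0 i : 0 <= y i.
Proof. by have := x_ge0 i; have := a01 i; lra. Qed.

Lemma emptied_ge0 i : 0 <= x' i.
Proof. by rewrite /empty_step; case: (i \in S); [exact: Rmax_l | exact: fill_ge0]. Qed.

Lemma fill_potential_le : potential lam y <= potential lam x + lam * heavy.
Proof.
apply: (Rle_trans _ _ _ (potential_fill_le lam x a)); apply: Rplus_le_compat_l.
apply: Rmult_le_compat_l; first lra.
apply: (sum_weighted_fill_le _ _ _ (exp (lam * theta))) => // [|i i_in|j j_out].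
- by rewrite sum_a card_S.
- by apply/exp_le_exp/Rmult_le_compat_l; [lra | exact: theta_in].
- by apply/exp_le_exp/Rmult_le_compat_l; [lra | exact: theta_out].
Qed.

Lemma emptied_potential_split :
  potential lam x' =
  \big[Rplus/0]_(i in S) exp (lam * Rmax 0 (y i - (1 + eps))) +
  \big[Rplus/0]_(i | i \notin S) w i.
Proof.
rewrite /potential (bigID (fun i => i \in S)) /=.
by congr (_ + _); apply: eq_bigr => i; rewrite /empty_step; [move=> -> | move/negbTE ->].
Qed.

Lemma fill_potential_split :
  potential lam y = heavy + \big[Rplus/0]_(i | i \notin S) w i.
Proof. by rewrite /potential (bigID (fun i => i \in S)). Qed.

Lemma emptied_potential_le_heavy :
  INR p * K <= heavy -> potential lam x' <= potential lam x.
Proof.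
move=> heavy_ge; set u := lam * (1 + eps); set c := drift lam (1 + eps).
have d_ge0 : 0 <= 1 + eps by lra.
have u_ge0 : 0 <= u by rewrite /u; nra.
have emptied_le : \big[Rplus/0]_(i in S) exp (lam * Rmax 0 (y i - (1 + eps))) <=
                  / (1 + u) * heavy + INR p.
  have trunc_le i := exp_trunc_le_frac lam (1 + eps) (y i) (Rlt_le _ _ lam_gt0) d_ge0.
  eapply Rle_trans; first by apply: sumR_le => i _; exact: trunc_le.
  by rewrite big_split /= sumR_mull sumR_const card_S Rmult_1_r; exact: Rle_refl.
have drift_c : 1 <= c * K := drift_K.
have c_ge0 : 0 <= c by case: (Rle_lt_dec 0 c) => // c_lt0; nra.
have p_le : INR p <= c * heavy by have := pos_INR p; nra.
have heavy_split : / (1 + u) * heavy = heavy - (c + lam) * heavy.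
  by rewrite /c /drift -/u; field; lra.
have := fill_potential_le; rewrite emptied_potential_split fill_potential_split.
nra.
Qed.

Lemma emptied_potential_le_light :
  heavy < INR p * K -> potential lam x' <= INR n * K.
Proof.
move=> heavy_lt.
have heavy_ge : INR p * exp (lam * theta) <= heavy.
  rewrite -card_S -sumR_const; apply: sumR_le => i i_in.
  by apply/exp_le_exp/Rmult_le_compat_l; [lra | exact: theta_in].
have heavy_ge0 : 0 <= heavy by apply: sumR_ge0 => i _; exact: Rlt_le (exp_pos _).
have theta_lt : exp (lam * theta) < K by have := pos_INR p; nra.
have emptied_le : \big[Rplus/0]_(i in S) exp (lam * Rmax 0 (y i - (1 + eps))) <= heavy.
  by apply: sumR_le => i _; apply: exp_trunc_le; [lra | lra | exact: fill_ge0].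
have light_le : \big[Rplus/0]_(i | i \notin S) w i <= \big[Rplus/0]_(i | i \notin S) K.
  apply: sumR_le => j j_out; apply: (Rle_trans _ _ _ _ (Rlt_le _ _ theta_lt)).
  by apply/exp_le_exp/Rmult_le_compat_l; [lra | exact: theta_out].
have nK_split : INR n * K =
                \big[Rplus/0]_(i in S) K + \big[Rplus/0]_(i | i \notin S) K.
  by rewrite -sumR_ord_const (bigID (fun i => i \in S)).
have SK : \big[Rplus/0]_(i in S) K = INR p * K by rewrite sumR_const card_S.
rewrite emptied_potential_split; lra.
Qed.

Lemma potential_round_le : potential lam x <= INR n * K -> potential lam x' <= INR n * K.
Proof.
case: (Rle_lt_dec (INR p * K) heavy) =>
  [/emptied_potential_le_heavy | /emptied_potential_le_light]; lra.
Qed.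

End GreedyRound.

Lemma greedy_potential_invariant {n} {eps lam K : R} {x : state n} :
  0 <= eps -> 0 < lam -> 1 <= K ->
  1 <= drift lam (1 + eps) * K ->
  greedy_reachable eps x -> (forall i, 0 <= x i) /\ potential lam x <= INR n * K.
Proof.
move=> eps_ge0 lam_gt0 K_ge1 drift_K; elim=> [|{}x p a S _ [x_ge0 pot_le]].
  split=> [i|]; first exact: Rle_refl.
  rewrite /potential (eq_bigr (fun _ => 1)) => [|i _]; last by rewrite Rmult_0_r exp_0.
  by rewrite sumR_ord_const; have := pos_INR n; nra.
move=> [p_gt0 [_ [a01 sum_a]]] greedy.
have [theta [theta_in theta_out]] := greedy_threshold p_gt0 greedy.
have card_S : #|S| = p by case: greedy.
split=> [i|]; first by apply: emptied_ge0.
by apply: (@potential_round_le n p eps lam K theta) => //; lra.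
Qed.

Lemma greedy_backlog_le {n} {eps lam K : R} {x : state n} :
  0 <= eps -> 0 < lam -> 1 <= K ->
  1 <= drift lam (1 + eps) * K ->
  greedy_reachable eps x -> backlog_le x (ln (INR n * K) / lam).
Proof.
move=> eps_ge0 lam_gt0 K_ge1 drift_K reach i.
have [_ pot_le] := greedy_potential_invariant eps_ge0 lam_gt0 K_ge1 drift_K reach.
have term_le : exp (lam * x i) <= INR n * K.
  apply: (Rle_trans _ _ _ _ pot_le); apply: sumR_ge_term => j; exact: Rlt_le (exp_pos _).
have := ln_le_ln _ _ (exp_pos _) term_le; rewrite ln_exp => lam_x_le.
apply: (Rmult_le_reg_l lam) => //.
by have -> : lam * (ln (INR n * K) / lam) = ln (INR n * K) by field; lra.
Qed.

Lemma drift_quarter_eps {eps : R} : 0 < eps <= 1 ->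
  1 <= drift (eps / 4) (1 + eps) * (12 / (eps * eps)).
Proof.
move=> eps01; have den_gt0 : 0 < 4 + eps * (1 + eps) by nra.
have -> : drift (eps / 4) (1 + eps) * (12 / (eps * eps))
        = 3 * (3 - eps) / (4 + eps * (1 + eps)) by rewrite /drift; field; lra.
apply: (Rmult_le_reg_r (4 + eps * (1 + eps))) => //.
by rewrite /Rdiv Rmult_assoc Rinv_l; nra.
Qed.

Lemma one_le_div_sq {c eps : R} : 1 <= c -> 0 < eps <= 1 -> 1 <= c / (eps * eps).
Proof.
move=> c_ge1 eps01; apply: (Rmult_le_reg_r (eps * eps)); first nra.
by rewrite /Rdiv Rmult_assoc Rinv_l; nra.
Qed.

Lemma ln_mul_div_sq_le {m eps : R} : 12 <= m -> 1 <= m * eps -> eps <= 1 ->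
  ln (m * (12 / (eps * eps))) <= 4 * ln m.
Proof.
move=> m_ge12 m_eps_ge1 eps_le1.
have eps_gt0 : 0 < eps by nra.
have bound_gt0 : 0 < m * (12 / (eps * eps)).
  apply: Rmult_lt_0_compat; first lra; apply: Rdiv_lt_0_compat; nra.
have -> : 4 * ln m = ln (m ^ 4) by rewrite ln_pow; [simpl; ring | lra].
apply: ln_le_ln => //.
have -> : m ^ 4 = m * (m * m * m) by ring.
apply: Rmult_le_compat_l; first lra.
have sq_ge1 : 1 <= (m * eps) * (m * eps) by nra.
apply: (Rmult_le_reg_r (eps * eps)); first nra.
rewrite /Rdiv Rmult_assoc Rinv_l; nra.
Qed.

Theorem theorem7p1 :
  exists C : R, 0 < C /\
    forall eps : nat -> R,
      (forall n : nat, eps n <= 1) ->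
      (forall M : R, exists N : nat, forall n : nat, (N <= n)%N -> M <= INR n * eps n) ->
      exists N : nat, forall n : nat, (N <= n)%N ->
        forall x : state n, greedy_reachable (eps n) x ->
          backlog_le x (C / eps n * ln (INR n)).
Proof.
exists 16; split; first lra.
move=> eps eps_le1 n_eps_unbounded.
have [N1 n_eps_ge1] := n_eps_unbounded 1.
exists (maxn N1 12) => n; rewrite geq_max => /andP [N1_le n_ge12] x reach i.
have {}n_ge12 : 12 <= INR n by move/leP/le_INR: n_ge12 => /=; lra.
have {}n_eps_ge1 := n_eps_ge1 n N1_le.
have eps_gt0 : 0 < eps n by nra.
have eps01 : 0 < eps n <= 1 by split; [| exact: eps_le1].
have lam_gt0 : 0 < eps n / 4 by lra.
have K_ge1 : 1 <= 12 / (eps n * eps n) by apply: one_le_div_sq; [lra | exact: eps01].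
have := greedy_backlog_le (Rlt_le _ _ eps_gt0) lam_gt0 K_ge1 (drift_quarter_eps eps01) reach i.
have := ln_mul_div_sq_le n_ge12 n_eps_ge1 (eps_le1 n).
set L := ln (INR n); set B := ln _ => B_le xi_le.
apply: (Rle_trans _ _ _ xi_le).
have -> : B / (eps n / 4) = 4 / eps n * B by field; lra.
have -> : 16 / eps n * L = 4 / eps n * (4 * L) by field; lra.
apply: Rmult_le_compat_l => //; apply: Rlt_le; apply: Rdiv_lt_0_compat; lra.
Qed.
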